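(* Let $\phi_k$, $k\in\{2,3,\dots\}$, be networks satisfying, for all $k\in\{2,3,\dots\}$, $\mathcal I(\phi_k)=\mathcal O(\mathbf P_2(\phi_2,\mathfrak I_{k-1}))$, $\phi_{k+1}=\phi_k\bullet\mathbf P_2(\phi_2,\mathfrak I_{k-1})$, and $$\phi_2=\left(\left(\begin{pmatrix}1&-1\\0&1\\0&-1\end{pmatrix},\begin{pmatrix}0\\0\\0\end{pmatrix}\right),\Bigl(\begin{pmatrix}1&1&-1\end{pmatrix},0\Bigr)\right)\in(\mathbb R^{3\times2}\times\mathbb R^3)\times(\mathbb R^{1\times3}\times\mathbb R).$$ Let $d\in\mathbb N$, $L\in\mathbb R$, let $D\subseteq\mathbb R^d$ be a set, let $f\colon D\to\mathbb R$ satisfy $|f(x)-f(y)|\le L\sum_{i=1}^d|x_i-y_i|$ for all $x,y\in D$, let $\mathcal M\subseteq D$ satisfy $|\mathcal M|\in\{2,3,\dots\}$, let $m\colon\{1,\dots,|\mathcal M|\}\to\mathcal M$ be bijective, let $W_1\in\mathbb R^{(2d)\times d}$ be the matrix whose rows $2i-1$ and $2i$ are $e_i^T$ and $-e_i^T$ ($i=1,\dots,d$, $e_i$ the standard unit vectors), let $W_2=(-L,-L,\dots,-L)\in\mathbb R^{1\times(2d)}$, for $z=(z_1,\dots,z_d)\in\mathcal M$ let $B_z=(-z_1,z_1,-z_2,z_2,\dots,-z_d,z_d)^T\in\mathbb R^{2d}$, let $\mathcal W_1\in\mathbb R^{(2d|\mathcal M|)\times d}$ be $W_1$ stacked vertically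 $|\mathcal M|$ times, $\mathcal B_1=(B_{m(1)};B_{m(2)};\dots;B_{m(|\mathcal M|)})\in\mathbb R^{2d|\mathcal M|}$, $\mathcal W_2\in\mathbb R^{|\mathcal M|\times(2d|\mathcal M|)}$ the block-diagonal matrix with $|\mathcal M|$ diagonal blocks equal to $W_2$, $\mathcal B_2=(f(m(1)),\dots,f(m(|\mathcal M|)))^T$, and let $\Phi=\phi_{|\mathcal M|}\bullet((\mathcal W_1,\mathcal B_1),(\mathcal W_2,\mathcal B_2))$. Then (i) $\mathcal D(\Phi)=(d,2d|\mathcal M|,2|\mathcal M|-1,2|\mathcal M|-3,\dots,3,1)\in\mathbb N^{|\mathcal M|+2}$; (ii) $\|\mathcal T(\Phi)\|_\infty\le\max\{1,L,\sup_{z\in\mathcal M}\|z\|_\infty,2\sup_{z\in\mathcal M}|f(z)|\}$; (iii) $\sup_{x\in D}|f(x)-(\mathcal R_{\mathfrak r}(\Phi))(x)|\le 2L\sup_{x\in D}\inf_{y\in\mathcal M}\sum_{i=1}^d|x_i-y_i|$.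
   Context: A network is a tuple $\Phi=((W_1,B_1),\dots,(W_L,B_L))$ with $L\in\mathbb N$, $l_0,\dots,l_L\in\mathbb N$, $W_k\in\mathbb R^{l_k\times l_{k-1}}$, $B_k\in\mathbb R^{l_k}$; its length is $L$, its dimensions $\mathcal D(\Phi)=(l_0,\dots,l_L)$, input dimension $\mathcal I(\Phi)=l_0$, output dimension $\mathcal O(\Phi)=l_L$. Its ReLU realization $\mathcal R_{\mathfrak r}(\Phi)\colon\mathbb R^{l_0}\to\mathbb R^{l_L}$ is $x_0\mapsto W_Lx_{L-1}+B_L$ where $x_k=\mathfrak R(W_kx_{k-1}+B_k)$ for $k=1,\dots,L-1$ and $\mathfrak R$ applies $y\mapsto\max\{y,0\}$ componentwise. Its vectorization $\mathcal T(\Phi)\in\mathbb R^{\sum_kl_k(l_{k-1}+1)}$ is the concatenation over $k=1,\dots,L$ of the entries of $W_k$ listed row by row followed by the entries of $B_k$; $\|\cdot\|_\infty$ is the maximum norm. Composition: if $\Phi_1=((W_1,B_1),\dots,(W_L,B_L))$, $\Phi_2=((\mathfrak W_1,\mathfrak B_1),\dots,(\mathfrak W_{\mathfrak L},\mathfrak B_{\mathfrak L}))$ with $\mathcal I(\Phi_1)=\mathcal O(\Phi_2)$, then $\Phi_1\bullet\Phi_2=((\mathfrak W_1,\mathfrak B_1),\dots,(\mathfrak W_{\mathfrak L-1},\mathfrak B_{\mathfrak L-1}),(W_1\mathfrak W_{\mathfrak L},W_1\mathfrak B_{\mathfrak L}+B_1),(W_2,B_2),\dots,(W_L,B_L))$.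 Parallelization: for networks $\Phi_1,\dots,\Phi_n$ of the same length $L$ with $\Phi_i=((W_{i,1},B_{i,1}),\dots,(W_{i,L},B_{i,L}))$, $\mathbf P_n(\Phi_1,\dots,\Phi_n)=((\mathrm{diag}(W_{1,k},\dots,W_{n,k}),(B_{1,k};\dots;B_{n,k})))_{k=1,\dots,L}$ (block-diagonal weights, stacked biases). Identity networks: $\mathfrak I_1=\bigl(((1,-1)^T,(0,0)^T),((1\ \ -1),0)\bigr)$ and $\mathfrak I_d=\mathbf P_d(\mathfrak I_1,\dots,\mathfrak I_1)$ for $d\in\mathbb N$. *)

From HB Require Import structures.
From mathcomp Require Import all_boot all_order all_algebra.
From mathcomp Require Import all_classical all_reals.
From mathcomp Require Import ereal.
Set Implicit Arguments.
Unset Strict Implicit.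
Unset Printing Implicit Defensive.
Import Order.TTheory GRing.Theory Num.Theory.
Local Open Scope ring_scope.

Inductive NN (R : Type) : nat -> nat -> Type :=
| NLast (i o : nat) (W : 'M[R]_(o, i)) (B : 'cV[R]_o) : NN R i o
| NCons (i h o : nat) (W : 'M[R]_(h, i)) (B : 'cV[R]_h) (N : NN R h o) : NN R i o.
Arguments NLast {R i o}.
Arguments NCons {R i h o}.

Record Net (R : Type) := MkNet { nin : nat; nout : nat; net : NN R nin nout }.
Arguments MkNet {R nin nout}.

Fixpoint dimsNN R i o (N : NN R i o) : seq nat :=
  match N with
  | NLast i o _ _ => [:: i; o]
  | NCons i _ _ _ _ N' => i :: dimsNN N'
  end.
Definition dims R (Phi : Net R) : seq nat := dimsNN (net Phi).

Definition relu (R : realType) (y : R) : R := Num.max y 0.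
Fixpoint realizeNN (R : realType) i o (N : NN R i o) : 'cV[R]_i -> 'cV[R]_o :=
  match N in NN _ i o return 'cV[R]_i -> 'cV[R]_o with
  | NLast _ _ W B => fun x => W *m x + B
  | NCons _ _ _ W B N' => fun x => realizeNN N' (map_mx (@relu R) (W *m x + B))
  end.
Definition realize (R : realType) (Phi : Net R) : 'cV[R]_(nin Phi) -> 'cV[R]_(nout Phi) :=
  realizeNN (net Phi).

(* the identification R^1 = R (junk value 0 for other dimensions) *)
Definition cV1_val (R : realType) k : 'cV[R]_k -> R :=
  match k return 'cV[R]_k -> R with
  | 1%N => fun v => v ord0 ord0
  | _ => fun _ => 0
  end.

Definition layer_vec (R : Type) h i (W : 'M[R]_(h, i)) (B : 'cV[R]_h) : seq R :=
  [seq W a b | a <- enum 'I_h, b <- enum 'I_i] ++ [seq B a ord0 | a <- enum 'I_h].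
Fixpoint vecNN R i o (N : NN R i o) : seq R :=
  match N with
  | NLast _ _ W B => layer_vec W B
  | NCons _ _ _ W B N' => layer_vec W B ++ vecNN N'
  end.
Definition vectorize R (Phi : Net R) : seq R := vecNN (net Phi).

Definition maxnorm_seq (R : realType) (s : seq R) : R := \big[Num.max/0]_(x <- s) `|x|.
Definition maxnorm_cV (R : realType) d (z : 'cV[R]_d) : R := \big[Num.max/0]_(i < d) `|z i ord0|.

Definition compose_first (R : realType) i h o (N : NN R h o) :
    'M[R]_(h, i) -> 'cV[R]_h -> NN R i o :=
  match N in NN _ h o return 'M[R]_(h, i) -> 'cV[R]_h -> NN R i o with
  | NLast _ _ W B => fun W' B' => NLast (W *m W') (W *m B' + B)
  | NCons _ _ _ W B N' => fun W' B' => NCons (W *m W') (W *m B' + B) N'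
  end.
(* compNN N1 N2 = N1 • N2 (N2 is applied first) *)
Fixpoint compNN (R : realType) i h (N2 : NN R i h) o (N1 : NN R h o) {struct N2} : NN R i o :=
  match N2 in NN _ i h return NN R h o -> NN R i o with
  | NLast _ _ W' B' => fun N1 => compose_first N1 W' B'
  | NCons _ _ _ W' B' N2' => fun N1 => NCons W' B' (compNN N2' N1)
  end N1.
(* Phi1 • Phi2, defined when I(Phi1) = O(Phi2) (a junk network otherwise) *)
Definition compose (R : realType) (Phi1 Phi2 : Net R) : Net R :=
  @MkNet R (nin Phi2) (nout Phi1)
    match nout Phi2 =P nin Phi1 with
    | ReflectT e => compNN (ecast k (NN R (nin Phi2) k) e (net Phi2)) (net Phi1)
    | ReflectF _ => NLast 0 0
    end.

(* parallelization P_2 of two networks of the same length (junk otherwise) *)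
Fixpoint parNN (R : realType) i1 o1 (N1 : NN R i1 o1) i2 o2 (N2 : NN R i2 o2) {struct N1}
    : NN R (i1 + i2) (o1 + o2) :=
  match N1 in NN _ i1 o1 return NN R (i1 + i2) (o1 + o2) with
  | NLast _ _ W1 B1 =>
      match N2 in NN _ i2 o2 return NN R (_ + i2) (_ + o2) with
      | NLast _ _ W2 B2 => NLast (block_mx W1 0 0 W2) (col_mx B1 B2)
      | NCons _ _ _ _ _ _ => NLast 0 0
      end
  | NCons _ _ _ W1 B1 M1 =>
      match N2 in NN _ i2 o2 return NN R (_ + i2) (_ + o2) with
      | NLast _ _ _ _ => NLast 0 0
      | NCons _ _ _ W2 B2 M2 => NCons (block_mx W1 0 0 W2) (col_mx B1 B2) (parNN M1 M2)
      end
  end.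
Definition par2 (R : realType) (Phi1 Phi2 : Net R) : Net R := MkNet (parNN (net Phi1) (net Phi2)).

(* identity network I_d = P_d(I_1,...,I_1), written out:
   first layer: block-diagonal with d blocks (1,-1)^T, zero bias;
   second layer: block-diagonal with d blocks (1 -1), zero bias. *)
Definition id_w1 (R : realType) d : 'M[R]_(2 * d, d) :=
  \matrix_(r < 2 * d, j < d)
    (if val r == (2 * val j)%N then 1 else if val r == (2 * val j).+1 then -1 else 0).
Definition id_w2 (R : realType) d : 'M[R]_(d, 2 * d) :=
  \matrix_(i < d, r < 2 * d)
    (if val r == (2 * val i)%N then 1 else if val r == (2 * val i).+1 then -1 else 0).
Definition IdNet (R : realType) d : Net R :=
  MkNet (NCons (id_w1 R d) 0 (NLast (id_w2 R d) 0)).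

Definition phi2_w1 (R : realType) : 'M[R]_(3, 2) :=
  \matrix_(i < 3, j < 2)
    (if val i == 0%N then (if val j == 0%N then 1 else -1)
     else if val j == 0%N then 0 else if val i == 1%N then 1 else -1).
Definition phi2_w2 (R : realType) : 'M[R]_(1, 3) :=
  \matrix_(i < 1, j < 3) (if val j == 2%N then -1 else 1).
Definition phi2 (R : realType) : Net R :=
  MkNet (NCons (phi2_w1 R) 0 (NLast (phi2_w2 R) 0)).

(* W_1 in R^{(2d) x d}: rows 2i-1, 2i are e_i^T, -e_i^T (1-based) *)
Definition W1mat (R : realType) d : 'M[R]_(2 * d, d) :=
  \matrix_(r < 2 * d, j < d)
    (if val r == (2 * val j)%N then 1 else if val r == (2 * val j).+1 then -1 else 0).
Definition W2mat (R : realType) d (L : R) : 'M[R]_(1, 2 * d) := const_mx (- L).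
Lemma half_ord_proof d (r : 'I_(2 * d)) : (r./2 < d)%N.
Proof. by rewrite ltn_half_double -mul2n. Qed.
Definition half_ord d (r : 'I_(2 * d)) : 'I_d := Ordinal (half_ord_proof r).

Definition Bvec (R : realType) d (z : 'cV[R]_d) : 'cV[R]_(2 * d) :=
  \col_(r < 2 * d) (if odd r then z (half_ord r) ord0 else - z (half_ord r) ord0).

Definition approxNet (R : realType) d n (L : R) (f : 'cV[R]_d -> R) (m : 'I_n -> 'cV[R]_d)
    : Net R :=
  MkNet (NCons
    (@mxcol R n (fun _ => 2 * d)%N d (fun _ => W1mat R d))
    (@mxcol R n (fun _ => 2 * d)%N 1 (fun i => Bvec (m i)))
    (NLast
      (@mxblock R n n (fun _ => 1%N) (fun _ => 2 * d)%N
         (fun i j => if i == j then W2mat d L else 0))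
      (@mxcol R n (fun _ => 1%N) 1 (fun i => (f (m i))%:M)))).
Arguments approxNet {R} d n L f m.
Arguments realize {R} Phi.
Arguments dims {R} Phi.
Arguments vectorize {R} Phi.
Arguments compose {R} Phi1 Phi2.
Arguments par2 {R} Phi1 Phi2.
Arguments cV1_val {R k}.

From HB Require Import structures.
From mathcomp Require Import all_boot all_order all_algebra.
From mathcomp Require Import all_classical all_reals.
From mathcomp Require Import ereal.
From mathcomp Require Import zify lra.
Set Implicit Arguments.
Unset Strict Implicit.
Unset Printing Implicit Defensive.
Import Order.TTheory GRing.Theory Num.Theory.
Local Open Scope classical_set_scope.
Local Open Scope ring_scope.

(* The network phi_k computes the maximum of its k inputs: phi_2 realizes
   max(a, b) = relu(a - b) + relu(b) - relu(-b), and composing with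
   P_2(phi_2, I_(k-1)) replaces the first two inputs by their maximum.  Since
   relu(a) + relu(-a) = |a|, the two-layer network ((W_1, B_1), (W_2, B_2)) maps
   x to the cones f(z) - L |x - z|_1, z in M, so Phi(x) is their maximum; by
   Lipschitz continuity it lies between f(x) - 2 L |x - z|_1 and f(x) for every
   z in M.  The only layer of Phi not copied from its factors is W W_2 (bias W B_2),
   W the first layer of phi_|M|: every column of W_2 has a single nonzero entry,
   so the entries of W W_2 are bounded by L, and the rows of W have l1-norm at
   most 2, whence the bound 2 sup |f| for W B_2. *)

Section EntryBounds.
Variable R : realType.

Definition entries_le m n (c : R) (A : 'M[R]_(m, n)) := forall i j, `|A i j| <= c.
Definition rowsums_le m n (s : R) (A : 'M[R]_(m, n)) := forall i, \sum_j `|A i j| <= s.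
Definition sparse_cols m n (A : 'M[R]_(m, n)) :=
  forall j i i', A i j != 0 -> A i' j != 0 -> i = i'.

Lemma sum_norm_le_sparse (I : finType) (F : I -> R) (a : R) :
  0 <= a -> (forall i, `|F i| <= a) ->
  (forall i i', F i != 0 -> F i' != 0 -> i = i') -> \sum_i `|F i| <= a.
Proof.
move=> a0 Fa Fu; case: (pickP (fun i => F i != 0)) => [i0 Fi0|F0]; last first.
  by rewrite big1 // => i _; move/negbFE/eqP: (F0 i) ->; rewrite normr0.
rewrite (bigD1 i0) //= big1 ?addr0 // => i ne_i.
have [-> | Fi] := eqVneq (F i) 0; first by rewrite normr0.
by rewrite (Fu _ _ Fi0 Fi) eqxx in ne_i.
Qed.

Lemma entries_le_mulmx_sparse m k p (A : 'M[R]_(m, k)) (C : 'M[R]_(k, p)) (a c : R) :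
  0 <= a -> 0 <= c -> entries_le a A -> entries_le c C -> sparse_cols C ->
  entries_le (a * c) (A *m C).
Proof.
move=> a0 c0 Aa Cc Csp i j; rewrite mxE.
apply: le_trans (ler_norm_sum _ _ _) (sum_norm_le_sparse _ _ _).
- exact: mulr_ge0.
- by move=> l; rewrite normrM ler_pM.
- by move=> l l'; rewrite !mulf_eq0 !negb_or => /andP[_ +] /andP[_ +]; apply: Csp.
Qed.

Lemma entries_le_mulmx_rowsums m k p (A : 'M[R]_(m, k)) (C : 'M[R]_(k, p)) (s c : R) :
  0 <= c -> rowsums_le s A -> entries_le c C -> entries_le (s * c) (A *m C).
Proof.
move=> c0 As Cc i j; rewrite mxE.
apply: le_trans (ler_norm_sum _ _ _) _.
apply: (@le_trans _ _ (\sum_l `|A i l| * c)).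
  by apply: ler_sum => l _; rewrite normrM ler_wpM2l.
by rewrite -mulr_suml ler_wpM2r.
Qed.

Lemma entries_le_castmx m m' n (e : m = m') (c : R) (A : 'M[R]_(m, n)) :
  entries_le c A -> entries_le c (castmx (e, erefl) A).
Proof. by case: m' / e; rewrite castmx_id. Qed.

Lemma sparse_cols_castmx m m' n (e : m = m') (A : 'M[R]_(m, n)) :
  sparse_cols A -> sparse_cols (castmx (e, erefl) A).
Proof. by case: m' / e; rewrite castmx_id. Qed.

Section BlockDiagonal.
Variables (m1 m2 n1 n2 : nat) (A : 'M[R]_(m1, n1)) (B : 'M[R]_(m2, n2)).

Lemma entries_le_block_diag (c : R) :
  0 <= c -> entries_le c A -> entries_le c B -> entries_le c (block_mx A 0 0 B).
Proof.
move=> c0 Ac Bc i j.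
by case: (split_ordP i) => i' ->; case: (split_ordP j) => j' ->;
  rewrite ?block_mxEul ?block_mxEur ?block_mxEdl ?block_mxEdr ?mxE ?normr0.
Qed.

Lemma rowsums_le_block_diag (s : R) :
  rowsums_le s A -> rowsums_le s B -> rowsums_le s (block_mx A 0 0 B).
Proof.
move=> As Bs i; rewrite big_split_ord /=.
case: (split_ordP i) => i' ->.
  rewrite (eq_bigr (fun j => `|A i' j|)) => [|j _]; last by rewrite block_mxEul.
  by rewrite [X in _ + X]big1 ?addr0 // => j _; rewrite block_mxEur mxE normr0.
rewrite [X in X + _]big1 ?add0r => [|j _]; last by rewrite block_mxEdl mxE normr0.
by rewrite (eq_bigr (fun j => `|B i' j|)) // => j _; rewrite block_mxEdr.
Qed.

Lemma sparse_cols_block_diag :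
  sparse_cols A -> sparse_cols B -> sparse_cols (block_mx A 0 0 B).
Proof.
move=> Asp Bsp j i i'.
case: (split_ordP j) => j' ->; case: (split_ordP i) => r ->;
  case: (split_ordP i') => r' ->;
  rewrite ?block_mxEul ?block_mxEur ?block_mxEdl ?block_mxEdr ?mxE ?eqxx //.
- by move=> /(Asp _ _ _) /[apply] ->.
- by move=> /(Bsp _ _ _) /[apply] ->.
Qed.

End BlockDiagonal.

End EntryBounds.

Section Relu.
Variable R : realType.
Implicit Types a b : R.

Lemma relu_sub_reluN a : relu a - relu (- a) = a.
Proof. by rewrite /relu !maxEle; case: (lerP a 0); case: (lerP (- a) 0); lra. Qed.

Lemma relu_add_reluN a : relu a + relu (- a) = `|a|.
Proof.
by rewrite /relu !maxEle; case: (ger0P a); case: (lerP a 0); case: (lerP (- a) 0); lra.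
Qed.

Lemma relu_sub_add_max a b : relu (a - b) + b = Num.max a b.
Proof. by rewrite /relu !maxEle; case: (lerP (a - b) 0); case: (lerP a b); lra. Qed.

End Relu.

Lemma interleave_ord_proof k (t : 'I_k) (b : bool) : (2 * t + b < 2 * k)%N.
Proof. by case: t => t /=; case: b; lia. Qed.

Definition interleave_ord k (t : 'I_k) (b : bool) : 'I_(2 * k) :=
  Ordinal (interleave_ord_proof t b).

Lemma half_interleave_ord k (t : 'I_k) b : half_ord (interleave_ord t b) = t.
Proof. by apply: val_inj; rewrite /= addnC mul2n half_bit_double. Qed.

Lemma odd_interleave_ord k (t : 'I_k) b : odd (interleave_ord t b) = b.
Proof. by rewrite /= addnC mul2n oddD odd_double; case: b. Qed.

Lemma interleave_ordK k (r : 'I_(2 * k)) : interleave_ord (half_ord r) (odd r) = r.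
Proof. by apply: val_inj => /=; have := odd_double_half r; lia. Qed.

Lemma sum_interleave (R : realType) k (G : 'I_k -> bool -> R) :
  \sum_(r < 2 * k) G (half_ord r) (odd r) = \sum_(t < k) (G t false + G t true).
Proof.
rewrite (reindex (fun p : 'I_k * bool => interleave_ord p.1 p.2)); last first.
  exists (fun r => (half_ord r, odd r)) => [[t b] _|r _].
    by rewrite half_interleave_ord odd_interleave_ord.
  exact: interleave_ordK.
rewrite (eq_bigr (fun p => G p.1 p.2)) => [|p _]; last first.
  by rewrite half_interleave_ord odd_interleave_ord.
by rewrite -(pair_bigA _ G); apply: eq_bigr => t _; rewrite big_bool addrC.
Qed.

Section IdentityNetwork.
Variable R : realType.

Lemma id_w1E k (r : 'I_(2 * k)) (j : 'I_k) :
  id_w1 R k r j = if j == half_ord r then (-1) ^+ odd r else 0.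
Proof.
have rE := odd_double_half r; rewrite mxE.
case: (eqVneq j (half_ord r)) => [->|ne] /=.
  by case: (odd r) rE => /= rE; (do ! case: eqP => ? //=); exfalso; lia.
have {}ne : nat_of_ord j <> r./2 by move=> e; move/eqP: ne; apply; apply: val_inj.
by case: (odd r) rE => /= rE; (do ! case: eqP => ? //=); exfalso; lia.
Qed.

Lemma id_w2E k (t : 'I_k) (r : 'I_(2 * k)) : id_w2 R k t r = id_w1 R k r t.
Proof. by rewrite !mxE. Qed.

Lemma id_w1_mul k (x : 'cV[R]_k) (r : 'I_(2 * k)) :
  (id_w1 R k *m x) r 0 = (-1) ^+ odd r * x (half_ord r) 0.
Proof.
rewrite mxE (bigD1 (half_ord r)) //= id_w1E eqxx big1 ?addr0 // => j ne.
by rewrite id_w1E (negbTE ne) mul0r.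
Qed.

Lemma entries_le_id_w1 k : entries_le 1 (id_w1 R k).
Proof. by move=> r j; rewrite id_w1E; case: eqP; rewrite ?normrX ?normrN1 ?expr1n ?normr0. Qed.

Lemma rowsums_le_id_w1 k : rowsums_le 1 (id_w1 R k).
Proof.
move=> r; apply: sum_norm_le_sparse => //; first exact: entries_le_id_w1.
move=> j j'; rewrite !id_w1E.
by case: (eqVneq j); case: (eqVneq j'); rewrite ?eqxx // => -> ->.
Qed.

Lemma sparse_cols_id_w2 k : sparse_cols (id_w2 R k).
Proof.
move=> r t t'; rewrite !id_w2E !id_w1E.
by case: (eqVneq t); case: (eqVneq t'); rewrite ?eqxx // => -> ->.
Qed.

Lemma realize_id_layers k (v : 'cV[R]_k) :
  id_w2 R k *m map_mx (@relu R) (id_w1 R k *m v) = v.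
Proof.
apply/matrixP => t j; rewrite (ord1 j) mxE.
rewrite (eq_bigr (fun r => (if t == half_ord r then (-1) ^+ odd r else 0) *
                           relu ((-1) ^+ odd r * v (half_ord r) 0))) => [|r _]; last first.
  by rewrite id_w2E id_w1E mxE id_w1_mul.
rewrite (sum_interleave (fun t' b =>
  (if t == t' then (-1) ^+ b else 0) * relu ((-1) ^+ b * v t' 0))).
rewrite (bigD1 t) //= big1 => [|t' ne]; last by rewrite eq_sym (negbTE ne) !mul0r addr0.
by rewrite eqxx !mul1r mulN1r mulN1r addr0 relu_sub_reluN.
Qed.

End IdentityNetwork.

Section L1Distance.
Variable R : realType.

Definition l1_dist d (x y : 'cV[R]_d) : R := \sum_(t < d) `|x t ord0 - y t ord0|.

Lemma BvecE d (z : 'cV[R]_d) (r : 'I_(2 * d)) :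
  Bvec z r 0 = - ((-1) ^+ odd r * z (half_ord r) 0).
Proof. by rewrite mxE; case: (odd r); rewrite ?mulN1r ?mul1r ?opprK. Qed.

Lemma sum_relu_W1mat_Bvec d (x z : 'cV[R]_d) :
  \sum_r relu ((W1mat R d *m x + Bvec z) r 0) = l1_dist x z.
Proof.
rewrite (eq_bigr (fun r : 'I_(2 * d) =>
                   relu ((-1) ^+ odd r * (x (half_ord r) 0 - z (half_ord r) 0))))
  => [|r _]; last by rewrite mxE [W1mat R d]/(id_w1 R d) id_w1_mul BvecE mulrBr.
rewrite (sum_interleave (fun t b => relu ((-1) ^+ b * (x t 0 - z t 0)))).
by apply: eq_bigr => t _; rewrite mul1r mulN1r relu_add_reluN.
Qed.

End L1Distance.

Section Composition.
Variable R : realType.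
Variables (i h1 o2 a h o : nat) (W1 : 'M[R]_(h1, i)) (B1 : 'cV[R]_h1).
Variables (W2 : 'M[R]_(o2, h1)) (B2 : 'cV[R]_o2) (W : 'M[R]_(h, a)) (B : 'cV[R]_h).
Variables (rest : NN R h o) (e : o2 = a).

Lemma compose_two_layers :
  compose (MkNet (NCons W B rest)) (MkNet (NCons W1 B1 (NLast W2 B2))) =
  MkNet (NCons W1 B1
    (NCons (W *m castmx (e, erefl) W2) (W *m castmx (e, erefl) B2 + B) rest)).
Proof.
rewrite /compose /=; case: eqP => [e'|//]; rewrite (eq_irrelevance e' e).
by case: a / e W rest {e'} => W' rest' /=; rewrite !castmx_id.
Qed.

Lemma realize_merged_layer x :
  realizeNN (NCons W1 B1
    (NCons (W *m castmx (e, erefl) W2) (W *m castmx (e, erefl) B2 + B) rest)) x =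
  realizeNN (NCons W B rest) (castmx (e, erefl) (realizeNN (NCons W1 B1 (NLast W2 B2)) x)).
Proof.
by case: a / e W rest => W' rest'; rewrite /= !castmx_id mulmxDr !mulmxA addrA.
Qed.

Lemma realize_compose_two_layers x :
  realize (compose (MkNet (NCons W B rest)) (MkNet (NCons W1 B1 (NLast W2 B2)))) x =
  realizeNN (NCons W B rest) (castmx (e, erefl) (realizeNN (NCons W1 B1 (NLast W2 B2)) x)).
Proof.
rewrite -realize_merged_layer /compose /realize /=; case: eqP => [e'|//].
rewrite (eq_irrelevance e' e).
by case: a / e W rest {e'} => W' rest' /=; rewrite !castmx_id.
Qed.

End Composition.
Arguments compose_two_layers {R i h1 o2 a h o W1 B1 W2 B2 W B rest} e.

Section VectorBounds.
Variable R : realType.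

Lemma maxnorm_seq_le (s : seq R) (c : R) :
  0 <= c -> all (fun x => `|x| <= c) s -> maxnorm_seq s <= c.
Proof.
move=> c0; rewrite /maxnorm_seq; elim: s => [|x s IH]; first by rewrite big_nil.
by rewrite big_cons /= => /andP[hx hs]; rewrite ge_max hx IH.
Qed.

Lemma all_layer_vec_le h i (W : 'M[R]_(h, i)) (B : 'cV[R]_h) (c : R) :
  entries_le c W -> entries_le c B -> all (fun x => `|x| <= c) (layer_vec W B).
Proof.
move=> Wc Bc; rewrite /layer_vec all_cat; apply/andP; split.
  by apply/allP => x /allpairsP [[r j] [_ _ ->]].
by apply/allP => x /mapP [r _ ->].
Qed.

End VectorBounds.

Section MaxNetworks.
Variable R : realType.

Definition is_max_entry k (x : 'cV[R]_k) (a : R) :=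
  (forall i, x i 0 <= a) /\ exists i, a = x i 0.

Lemma is_max_entry_castmx k k' (e : k = k') (x : 'cV[R]_k) a :
  is_max_entry (castmx (e, erefl) x) a <-> is_max_entry x a.
Proof. by case: k' / e; rewrite castmx_id. Qed.

Lemma ord2_cases (j : 'I_2) : j = 0 \/ j = 1.
Proof. by case: j => [[|[|//]] ?]; [left|right]; apply: val_inj. Qed.

Lemma is_max_entry_merge2 k (x : 'cV[R]_(2 + k)) a :
  is_max_entry (col_mx (Num.max (usubmx x 0 0) (usubmx x 1 0))%:M (dsubmx x)) a ->
  is_max_entry x a.
Proof.
case=> [ge [i ai]]; split=> [j|].
  case: (split_ordP j) => j' ->.
    apply: le_trans (ge (lshift k 0)); rewrite col_mxEu mxE mulr1n.
    by rewrite le_max !mxE; case: (ord2_cases j') => ->; rewrite lexx ?orbT.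
  by have := ge (rshift 1 j'); rewrite col_mxEd mxE.
rewrite {}ai; case: (split_ordP i) => i' ->.
  2: by exists (rshift 2 i'); rewrite col_mxEd mxE.
rewrite (ord1 i') col_mxEu mxE mulr1n maxEle !mxE.
by case: ifP => _; [exists (lshift k 1) | exists (lshift k 0)].
Qed.

Lemma realize_phi2_layers (u : 'cV[R]_2) :
  phi2_w2 R *m map_mx (@relu R) (phi2_w1 R *m u) = (Num.max (u 0 0) (u 1 0))%:M.
Proof.
apply/matrixP => i j.
rewrite !ord1 !mxE !big_ord_recr !big_ord0 /= !mxE !big_ord_recr !big_ord0 /= !mxE /=.
have -> : widen_ord (leqnSn 1) ord_max = 0 :> 'I_2 by apply: val_inj.
have -> : ord_max = 1 :> 'I_2 by apply: val_inj.
by rewrite !add0r !mul1r !mul0r !add0r !mulN1r -addrA relu_sub_reluN relu_sub_add_max.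
Qed.

Definition max_step_w1 k := block_mx (phi2_w1 R) 0 0 (id_w1 R k).
Definition max_step_w2 k := block_mx (phi2_w2 R) 0 0 (id_w2 R k).

Lemma par2_phi2_IdNet k :
  par2 (phi2 R) (IdNet R k) = MkNet (NCons (max_step_w1 k) 0 (NLast (max_step_w2 k) 0)).
Proof. by rewrite /par2 /= !col_mx0. Qed.

Lemma realize_max_step k (x : 'cV[R]_(2 + k)) :
  realizeNN (NCons (max_step_w1 k) 0 (NLast (max_step_w2 k) 0)) x =
  col_mx (Num.max (usubmx x 0 0) (usubmx x 1 0))%:M (dsubmx x).
Proof.
rewrite /= !addr0 -{1}(vsubmxK x) mul_block_col !mul0mx addr0 add0r map_col_mx.
by rewrite mul_block_col !mul0mx addr0 add0r realize_id_layers realize_phi2_layers.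
Qed.

Variant max_net k : Net R -> Prop :=
  MaxNet a h (W : 'M[R]_(h, a)) (rest : NN R h 1) of
      a = k
    & entries_le 1 W
    & rowsums_le 2 W
    & all (fun x => `|x| <= 1) (vecNN rest)
    & dimsNN rest = [seq (2 * (k - j)).-1 | j <- iota 0 k]
    & (forall x, is_max_entry x (realizeNN (NCons W 0 rest) x 0 0)) :
    max_net k (MkNet (NCons W 0 rest)).

Lemma entries_le1_signs m n (A : 'M[R]_(m, n)) :
  (forall r j, A r j \in [:: 0; 1; -1]) -> entries_le 1 A.
Proof.
move=> A01 r j; have := A01 r j; rewrite !inE => /or3P[] /eqP ->;
  by rewrite ?normrN ?normr1 ?normr0 ?ler01 ?lexx.
Qed.

Lemma entries_le_phi2_w1 : entries_le 1 (phi2_w1 R).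
Proof.
by apply: entries_le1_signs => r j; rewrite mxE; do ! case: ifP; rewrite !inE eqxx ?orbT.
Qed.

Lemma entries_le_phi2_w2 : entries_le 1 (phi2_w2 R).
Proof.
by apply: entries_le1_signs => r j; rewrite mxE; case: ifP; rewrite !inE eqxx ?orbT.
Qed.

Lemma rowsums_le_phi2_w1 : rowsums_le 2 (phi2_w1 R).
Proof.
move=> r; apply: le_trans (ler_sum _ (fun j _ => entries_le_phi2_w1 r j)) _.
by rewrite sumr_const card_ord.
Qed.

Lemma sparse_cols_phi2_w2 : sparse_cols (phi2_w2 R).
Proof. by move=> j i i'; rewrite (ord1 i) (ord1 i'). Qed.

Lemma entries_le_max_step_w1 k : entries_le 1 (max_step_w1 k).
Proof.
apply: entries_le_block_diag; first exact: ler01.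
  exact: entries_le_phi2_w1.
exact: entries_le_id_w1.
Qed.

Lemma rowsums_le_max_step_w1 k : rowsums_le 2 (max_step_w1 k).
Proof.
apply: rowsums_le_block_diag; first exact: rowsums_le_phi2_w1.
by move=> r; apply: le_trans (rowsums_le_id_w1 _ r) _; rewrite ler1n.
Qed.

Lemma entries_le_max_step_w2 k : entries_le 1 (max_step_w2 k).
Proof.
apply: entries_le_block_diag; [exact: ler01 | exact: entries_le_phi2_w2 |].
by move=> t r; rewrite id_w2E; apply: entries_le_id_w1.
Qed.

Lemma sparse_cols_max_step_w2 k : sparse_cols (max_step_w2 k).
Proof.
by apply: sparse_cols_block_diag; [exact: sparse_cols_phi2_w2 | exact: sparse_cols_id_w2].
Qed.

Lemma max_net_phi2 : max_net 2 (phi2 R).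
Proof.
apply: MaxNet => //; first exact: entries_le_phi2_w1; first exact: rowsums_le_phi2_w1.
  apply: all_layer_vec_le; first exact: entries_le_phi2_w2.
  by move=> r j; rewrite mxE normr0.
move=> x; rewrite /= !addr0 realize_phi2_layers mxE mulr1n; split.
  by move=> i; rewrite le_max; case: (ord2_cases i) => ->; rewrite lexx ?orbT.
by rewrite maxEle; case: ifP => _; [exists 1 | exists 0].
Qed.

Lemma max_net_step k N : (2 <= k)%N -> max_net k N ->
  max_net k.+1 (compose N (par2 (phi2 R) (IdNet R (k - 1)))).
Proof.
move=> k2 [a h W rest ak W_le1 W_rows rest_le1 rest_dims W_max].
have e : (1 + (k - 1))%N = a by lia.
rewrite par2_phi2_IdNet (compose_two_layers e).
have cast0 : castmx (e, erefl) (0 : 'cV[R]_(1 + (k - 1))) = 0.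
  by apply/matrixP => r j; rewrite castmxE !mxE.
apply: MaxNet.
- lia.
- exact: entries_le_max_step_w1.
- exact: rowsums_le_max_step_w1.
- rewrite /= all_cat rest_le1 andbT; apply: all_layer_vec_le.
    rewrite -[1](mulr1 1); apply: entries_le_mulmx_sparse; rewrite ?ler01 //.
      exact/entries_le_castmx/entries_le_max_step_w2.
    exact/sparse_cols_castmx/sparse_cols_max_step_w2.
  by move=> r j; rewrite cast0 mulmx0 addr0 mxE normr0.
- rewrite /= rest_dims (iotaDl 1 0 k) -map_comp; congr (_ :: _); first lia.
- move=> x; rewrite realize_merged_layer realize_max_step.
  by apply/is_max_entry_merge2/(is_max_entry_castmx e)/W_max.
Qed.

Lemma max_net_phi (phi : nat -> Net R)
  (Hrec : forall k : nat, (2 <= k)%N ->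
     phi k.+1 = compose (phi k) (par2 (phi 2%N) (IdNet R (k - 1))))
  (H2 : phi 2%N = phi2 R) k :
  (2 <= k)%N -> max_net k (phi k).
Proof.
elim: k => [//|k IH] k2.
have [->|k1] := eqVneq k 1%N; first by rewrite H2; exact: max_net_phi2.
have k2' : (2 <= k)%N by lia.
by rewrite Hrec // H2; apply: max_net_step => //; apply: IH.
Qed.

End MaxNetworks.

Section ComposeMaxNet.
Variable R : realType.
Variables (i h1 o2 : nat) (W1 : 'M[R]_(h1, i)) (B1 : 'cV[R]_h1).
Variables (W2 : 'M[R]_(o2, h1)) (B2 : 'cV[R]_o2).
Variables (k : nat) (N : Net R) (e : o2 = k).
Hypothesis maxN : max_net k N.

Lemma dims_compose_max_net :
  dims (compose N (MkNet (NCons W1 B1 (NLast W2 B2)))) =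
  [:: i, h1 & [seq (2 * (k - j)).-1 | j <- iota 0 k]].
Proof.
case: maxN => a h W rest ak _ _ _ rest_dims _; have ea : o2 = a by rewrite e ak.
by rewrite (compose_two_layers ea) /dims /= rest_dims.
Qed.

Lemma maxnorm_compose_max_net (C s : R) :
  1 <= C -> entries_le C W1 -> entries_le C B1 -> entries_le C W2 -> sparse_cols W2 ->
  0 <= s -> entries_le s B2 -> 2 * s <= C ->
  maxnorm_seq (vectorize (compose N (MkNet (NCons W1 B1 (NLast W2 B2))))) <= C.
Proof.
move=> C1 W1C B1C W2C W2sp s0 B2s sC.
have C0 : 0 <= C by apply: le_trans C1.
case: maxN => a h W rest ak W_le1 W_rows rest_le1 _ _; have ea : o2 = a by rewrite e ak.
rewrite (compose_two_layers ea); apply: maxnorm_seq_le => //.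
rewrite /vectorize [vecNN _]/= all_cat (all_layer_vec_le W1C B1C) andTb all_cat.
apply/andP; split; last by apply: sub_all rest_le1 => x /le_trans; apply.
apply: all_layer_vec_le; rewrite ?addr0.
  rewrite -[C](mul1r C); apply: entries_le_mulmx_sparse; rewrite ?ler01 //.
    exact: entries_le_castmx.
  exact: sparse_cols_castmx.
move=> r j; apply: le_trans sC.
exact: entries_le_mulmx_rowsums s0 W_rows (entries_le_castmx ea B2s) r j.
Qed.

Lemma realize_compose_max_net x :
  is_max_entry (realizeNN (NCons W1 B1 (NLast W2 B2)) x)
    (cV1_val (realize (compose N (MkNet (NCons W1 B1 (NLast W2 B2)))) x)).
Proof.
case: maxN => a h W rest ak _ _ _ _ W_max; have ea : o2 = a by rewrite e ak.
rewrite (realize_compose_two_layers ea) /=.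
by apply/(is_max_entry_castmx ea)/W_max.
Qed.

End ComposeMaxNet.
Arguments dims_compose_max_net {R i h1 o2 W1 B1 W2 B2 k N}.
Arguments realize_compose_max_net {R i h1 o2 W1 B1 W2 B2 k N}.

Section ApproxNet.
Variable R : realType.
Variables (d n : nat) (L : R) (f : 'cV[R]_d -> R) (m : 'I_n -> 'cV[R]_d).

Definition approx_w1 := @mxcol R n (fun _ => 2 * d)%N d (fun _ => W1mat R d).
Definition approx_b1 := @mxcol R n (fun _ => 2 * d)%N 1 (fun i => Bvec (m i)).
Definition approx_w2 := @mxblock R n n (fun _ => 1%N) (fun _ => 2 * d)%N
  (fun i j => if i == j then W2mat d L else 0).
Definition approx_b2 := @mxcol R n (fun _ => 1%N) 1 (fun i => (f (m i))%:M).

Lemma realize_approxNet x r :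
  realizeNN (NCons approx_w1 approx_b1 (NLast approx_w2 approx_b2)) x r 0 =
  f (m (tagnat.sig1 r)) - L * l1_dist x (m (tagnat.sig1 r)).
Proof.
rewrite /=.
have -> : map_mx (@relu R) (approx_w1 *m x + approx_b1) =
    \mxcol_i map_mx (@relu R) (W1mat R d *m x + Bvec (m i)).
  apply/matrixP => r' c; rewrite !mxE; congr relu; congr (_ + _).
  by apply: eq_bigr => j _; rewrite mxE.
rewrite mul_mxblock_mxrow mxE mxE.
rewrite (bigD1 (tagnat.sig1 r)) //= eqxx big1 => [|j Hj]; last first.
  by rewrite eq_sym (negbTE Hj) mul0mx.
rewrite addr0 [X in _ + X]mxE mxE (ord1 (tagnat.sig2 r)) mxE eqxx mulr1n addrC.
congr (_ + _); rewrite -sum_relu_W1mat_Bvec mulr_sumr -sumrN.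
by apply: eq_bigr => c _; rewrite !mxE mulNr.
Qed.

Lemma maxnorm_cV_ge (z : 'cV[R]_d) t : `|z t 0| <= maxnorm_cV z.
Proof. by rewrite /maxnorm_cV (bigD1 t) //= le_max lexx. Qed.

Lemma entries_le_approx_w1 (c : R) : 1 <= c -> entries_le c approx_w1.
Proof. by move=> c1 r j; rewrite mxE; apply: le_trans c1; apply: entries_le_id_w1. Qed.

Lemma entries_le_approx_b1 (c : R) :
  (forall i, maxnorm_cV (m i) <= c) -> entries_le c approx_b1.
Proof.
move=> mc r j; rewrite (ord1 j) mxE BvecE normrN normrM normrX normrN1 expr1n mul1r.
exact: le_trans (maxnorm_cV_ge _ _) (mc _).
Qed.

Lemma entries_le_approx_w2 (c : R) : 0 <= L -> L <= c -> entries_le c approx_w2.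
Proof.
move=> L0 Lc r j; rewrite !mxE; case: eqP => _; rewrite !mxE ?normrN ?normr0 ?ger0_norm //.
exact: le_trans L0 Lc.
Qed.

Lemma sig1_ones_inj : injective (@tagnat.sig1 n (fun _ => 1%N)).
Proof.
move=> r r' rr'; rewrite -(tagnat.sig2K r) -(tagnat.sig2K r').
by move: (tagnat.sig2 r) (tagnat.sig2 r'); rewrite rr' => u v; rewrite (ord1 u) (ord1 v).
Qed.

Lemma sparse_cols_approx_w2 : sparse_cols approx_w2.
Proof.
move=> c r r'; rewrite !mxE.
case: (eqVneq (tagnat.sig1 r)) => [rc|_]; last by rewrite mxE eqxx.
case: (eqVneq (tagnat.sig1 r')) => [r'c|_]; last by rewrite !mxE eqxx.
by move=> _ _; apply: sig1_ones_inj; rewrite rc r'c.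
Qed.

Lemma entries_le_approx_b2 (c : R) : (forall i, `|f (m i)| <= c) -> entries_le c approx_b2.
Proof. by move=> fc r j; rewrite mxE (ord1 j) (ord1 (tagnat.sig2 r)) mxE mulr1n. Qed.

End ApproxNet.

Section LipschitzApproximation.
Variable R : realType.
Variables (d : nat) (D : set 'cV[R]_d) (f : 'cV[R]_d -> R) (L : R).
Hypothesis f_lip : forall x y, D x -> D y -> `|f x - f y| <= L * l1_dist x y.

Lemma l1_dist_gt0 (x y : 'cV[R]_d) : x != y -> 0 < l1_dist x y.
Proof.
move=> xy; have [t xyt] : exists t, x t ord0 != y t ord0.
  apply/existsP; move: xy; apply: contraNT; rewrite negb_exists => /forallP xy.
  by apply/eqP/matrixP => t j; rewrite (ord1 j); apply/eqP/negPn/xy.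
by rewrite /l1_dist (bigD1 t) //= ltr_pwDl ?sumr_ge0 // normr_gt0 subr_eq0.
Qed.

Lemma lipschitz_const_ge0 x y : D x -> D y -> x != y -> 0 <= L.
Proof.
move=> Dx Dy /l1_dist_gt0 xy; have := le_trans (normr_ge0 _) (f_lip Dx Dy).
by rewrite pmulr_lge0.
Qed.

Lemma max_cone_error (I : Type) (y : I -> 'cV[R]_d) x a :
  D x -> (forall i, D (y i)) ->
  (forall i, f (y i) - L * l1_dist x (y i) <= a) ->
  (exists i, a = f (y i) - L * l1_dist x (y i)) ->
  forall i, `|f x - a| <= 2 * L * l1_dist x (y i).
Proof.
(* [a <= f x] by Lipschitz continuity at the maximizing cone [j], and
   [f x - a <= f x - f (y i) + L * l1_dist x (y i)]. *)
move=> Dx Dy a_ge [j aj] i.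
move: (f_lip Dx (Dy j)) (f_lip Dx (Dy i)) (a_ge i).
rewrite !ler_norml -mulrA => /andP[fj _] /andP[fi' fi] ai.
by apply/andP; split; lra.
Qed.

End LipschitzApproximation.

Section ComposedApproxNet.
Variable R : realType.
Variables (d n : nat) (L : R) (f : 'cV[R]_d -> R) (m : 'I_n -> 'cV[R]_d) (N : Net R).
Hypothesis maxN : max_net n N.

Let sum_ones : (\sum_(i < n) 1)%N = n.
Proof. by rewrite sum_nat_const card_ord muln1. Qed.

Lemma dims_compose_approxNet :
  dims (compose N (approxNet d n L f m)) =
  [:: d, 2 * d * n & [seq (2 * (n - k)).-1 | k <- iota 0 n]]%N.
Proof. by rewrite (dims_compose_max_net sum_ones maxN) sum_nat_const card_ord mulnC. Qed.

Lemma maxnorm_compose_approxNet (sz sf : R) :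
  0 <= L -> (forall i, maxnorm_cV (m i) <= sz) -> 0 <= sf -> (forall i, `|f (m i)| <= sf) ->
  maxnorm_seq (vectorize (compose N (approxNet d n L f m))) <=
  Num.max 1 (Num.max L (Num.max sz (2 * sf))).
Proof.
move=> L0 m_sz sf0 f_sf; apply: (maxnorm_compose_max_net sum_ones maxN (s := sf)) => //.
- by rewrite le_max lexx.
- by apply: entries_le_approx_w1; rewrite le_max lexx.
- by apply: entries_le_approx_b1 => i; rewrite (le_trans (m_sz i)) // !le_max lexx !orbT.
- by apply: entries_le_approx_w2; rewrite // !le_max lexx !orbT.
- exact: sparse_cols_approx_w2.
- exact: entries_le_approx_b2 f_sf.
- by rewrite !le_max lexx !orbT.
Qed.

Lemma realize_compose_approxNet_error (D : set 'cV[R]_d) x :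
  (forall x y, D x -> D y -> `|f x - f y| <= L * l1_dist x y) ->
  (forall i, D (m i)) -> D x -> forall i,
  `|f x - cV1_val (realize (compose N (approxNet d n L f m)) x)| <= 2 * L * l1_dist x (m i).
Proof.
move=> f_lip mD Dx i; set out := cV1_val _.
have [out_ge [r out_eq]] : is_max_entry (realizeNN (NCons (approx_w1 R d n) (approx_b1 m)
    (NLast (approx_w2 d n L) (approx_b2 f m))) x) out.
  exact: realize_compose_max_net sum_ones maxN x.
have cone_le (r' : 'I_(\sum_(i < n) 1)) :
    f (m (tagnat.sig1 r')) - L * l1_dist x (m (tagnat.sig1 r')) <= out.
  by move: (out_ge r'); rewrite realize_approxNet.
rewrite realize_approxNet in out_eq.
have := max_cone_error f_lip Dx (fun r => mD (tagnat.sig1 r)) cone_le (ex_intro _ r out_eq).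
by move/(_ (tagnat.Rank i ord0)); rewrite tagnat.Rank1K.
Qed.

End ComposedApproxNet.

Section Extrema.
Variable R : realType.

Lemma le_sup_finite_image (T : Type) n (m : 'I_n -> T) (M : set T) (F : T -> R) z :
  M `<=` range m -> M z -> F z <= sup [set F z | z in M].
Proof.
move=> Mm Mz; apply: ub_le_sup; last by exists z.
exists (\sum_j `|F (m j)|) => _ [w Mw <-]; have [j _ <-] := Mm w Mw.
by rewrite (le_trans (ler_norm _)) // (bigD1 j) //= lerDl sumr_ge0.
Qed.

Lemma lee_mul_ereal_inf (T : Type) (M : set T) (g : T -> R) (c a : R) :
  0 <= c -> M !=set0 -> (forall y, M y -> a <= c * g y) ->
  (a%:E <= c%:E * ereal_inf [set (g y)%:E | y in M])%E.
Proof.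
move=> c0 [y0 My0] a_le; have [c_eq0|c_neq0] := eqVneq c 0.
  (* [0 * -oo = 0] in \bar R, so nothing is needed about the infimum. *)
  by rewrite c_eq0 mul0e lee_fin; have := a_le _ My0; rewrite c_eq0 mul0r.
have c_gt0 : 0 < c by rewrite lt0r c_neq0.
rewrite -(divfK c_neq0 a) mulrC EFinM lee_pmul2l ?lte_fin //.
apply: le_ereal_inf_tmp => _ [y My <-].
by rewrite lee_fin ler_pdivrMr // mulrC a_le.
Qed.

End Extrema.

Theorem proposition3p5 (R : realType) (phi : nat -> Net R)
  (Hin : forall k : nat, (2 <= k)%N ->
     nin (phi k) = nout (par2 (phi 2%N) (IdNet R (k - 1))))
  (Hrec : forall k : nat, (2 <= k)%N ->
     phi k.+1 = compose (phi k) (par2 (phi 2%N) (IdNet R (k - 1))))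
  (H2 : phi 2%N = phi2 R)
  (d : nat) (Hd : (0 < d)%N) (L : R) (D : set 'cV[R]_d) (f : 'cV[R]_d -> R)
  (Hf : forall x y : 'cV[R]_d, D x -> D y ->
     `|f x - f y| <= L * \sum_(i < d) `|x i ord0 - y i ord0|)
  (M : set 'cV[R]_d) (HMD : M `<=` D) (n : nat) (Hn : (2 <= n)%N)
  (m : 'I_n -> 'cV[R]_d) (Hm : set_bij [set: 'I_n] M m) :
  let Phi := compose (phi n) (approxNet d n L f m) in
  [/\ dims Phi = ([:: d, 2 * d * n & [seq (2 * (n - k)).-1 | k <- iota 0 n]])%N,
      maxnorm_seq (vectorize Phi) <=
        Num.max 1 (Num.max L (Num.max (sup [set maxnorm_cV z | z in M])
                                      (2 * sup [set `|f z| | z in M])))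
    & (ereal_sup [set (`|f x - cV1_val (realize Phi x)|)%:E | x in D] <=
       (2 * L)%:E * ereal_sup
          [set ereal_inf [set (\sum_(i < d) `|x i ord0 - y i ord0|)%:E | y in M]
          | x in D])%E].
Proof.
move=> Phi; have [m_M m_inj m_surj] := Hm.
have mM i : M (m i) by apply: m_M.
have mD i : D (m i) by apply/HMD/mM.
have L0 : 0 <= L.
  apply: (lipschitz_const_ge0 Hf (mD (Ordinal (ltnW Hn))) (mD (Ordinal Hn))).
  by apply/eqP => /(m_inj _ _ (in_setT _) (in_setT _)) /(congr1 val).
have := max_net_phi Hrec H2 Hn; rewrite {}/Phi; move: (phi n) => N maxN.
have sup_ge (F : 'cV[R]_d -> R) i : F (m i) <= sup [set F z | z in M] :=
  le_sup_finite_image F m_surj (mM i).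
split; first exact: dims_compose_approxNet maxN.
  apply: (maxnorm_compose_approxNet maxN L0 (sup_ge _) _ (sup_ge _)).
  exact: le_trans (normr_ge0 _) (sup_ge _ (Ordinal (ltnW Hn))).
apply: ge_ereal_sup => _ [x Dx <-].
apply: (@le_trans _ _ ((2 * L)%:E * ereal_inf [set (l1_dist x y)%:E | y in M])%E).
  apply: lee_mul_ereal_inf => [| |y My]; first exact: mulr_ge0.
    by exists (m (Ordinal (ltnW Hn))).
  have [i _ <-] := m_surj y My; exact: (realize_compose_approxNet_error maxN Hf mD Dx i).
by apply: lee_wpmul2l; [rewrite lee_fin mulr_ge0 | apply: ereal_sup_ubound; exists x].
Qed.
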